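(* Let $\kappa=1$ and, for $\sigma\in[0,1]$ and $h>0$, define $$f(\sigma,h^{-1})=-\tfrac14\pi+\Im\log\Gamma\big(\tfrac34-\tfrac12\sigma+\tfrac12 i\kappa h^{-1}\big)-\Im\log\Gamma\big(\tfrac14-\tfrac12\sigma+\tfrac12 i\kappa h^{-1}\big).$$ Then for all $0<h^{-1}<\infty$ we have $-\frac\pi2<f(0,h^{-1})<0$ and $0<f(1,h^{-1})<\pi$, and $\partial_\sigma f(\sigma,h^{-1})>0$ for all $0<\sigma<1$ and $0<h^{-1}<\infty$. Hence for each $0<h^{-1}<\infty$ there exists a unique $\sigma(h)\in(0,1)$ such that $f(\sigma(h),h^{-1})=0$, and there are no solutions $\sigma\in(0,1)$ of $f(\sigma,h^{-1})=2\pi n$ for integers $n\neq0$.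
   Context: $\log\Gamma$ denotes the branch of the logarithm of the Gamma function which is analytic on $\mathbb{C}\setminus(-\infty,0]$ and satisfies $\log\Gamma(1)=0$. (This $f$ equals $\Im\log A(\lambda)$ for $A(\lambda)=e^{-i\pi/4}\sqrt2\,\Gamma(\frac34-\frac12 i\lambda)/\Gamma(\frac14-\frac12 i\lambda)$, $\lambda=-\kappa h^{-1}-i\sigma$, with this choice of branch.) *)

From Stdlib Require Import Reals.
From Coquelicot Require Import Coquelicot.
Open Scope R_scope.

(* Principal argument Arg w in (-PI, PI] (the usual atan2), Arg 0 := 0. *)
Definition Arg (w : C) : R :=
  let x := fst w in let y := snd w in
  if Rlt_dec 0 x then atan (y / x)
  else if Rlt_dec x 0 then
    (if Rle_dec 0 y then atan (y / x) + PI else atan (y / x) - PI)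
  else if Rlt_dec 0 y then PI / 2
  else if Rlt_dec y 0 then - (PI / 2)
  else 0.

Definition Clog (w : C) : C := (ln (Cmod w), Arg w).

(* k-th term (k >= 1) of Euler's product  Gamma z = (1/z) prod_{k>=1} (1+1/k)^z / (1+z/k),
   taken with the principal logarithm:  z log(1+1/k) - Log(1 + z/k). *)
Definition lnGamma_term (z : C) (n : nat) : C :=
  let k := INR (S n) in
  Cminus (Cmult z (RtoC (ln (1 + / k)))) (Clog (Cplus 1 (Cmult z (RtoC (/ k))))).

(* log Gamma z := - Log z + sum_{k>=1} [ z log(1+1/k) - Log(1+z/k) ].
   This is the branch of log Gamma analytic on C \ (-oo,0] with log Gamma 1 = 0. *)
Definition lnGamma (z : C) : C :=
  Cplus (Copp (Clog z))
    (Series (fun n => fst (lnGamma_term z n)), Series (fun n => snd (lnGamma_term z n))).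

Definition kappa : R := 1.

(* f(sigma, t) with t = h^{-1} *)
Definition fsig (sigma t : R) : R :=
  - (PI / 4)
  + snd (lnGamma (3/4 - sigma/2, kappa * t / 2))
  - snd (lnGamma (1/4 - sigma/2, kappa * t / 2)).

(* Put y = t/2 and c = 1/4 - sigma/2.  By Euler's product,
   f(sigma, t) = -pi/4 + sum_k [atan ((k + c + 1/2)/y) - atan ((k + c)/y)].
   For c > -1/4 each term strictly decreases in c (the window [k + c, k + c + 1/2] moves away from
   the peak of 1/(1 + u^2)); differentiating termwise, f increases strictly in sigma on [0, 1].
   At sigma = 1 the series plus the one at sigma = 0 telescopes.  At sigma = 0 it equals
   pi/4 - atan (exp (-2 pi y)): the argument theta(a, b) of 1 - exp (-2i (a - ib)) satisfies
   theta(2a, 2b) = theta(a, b) + theta(a + pi/2, b), so theta(pi/4, pi y) is a sum over the 2^m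
   pairs of nodes pi (k + 1/4)/2^(m+1), pi (k + 3/4)/2^(m+1); as theta(a, b) is atan (a/b) - a up
   to a defect with a-derivative O(b), each pair matches the k-th term of the series up to
   O(2^-m) times its length.  So f(0, t) = -atan (exp (-pi t)) and
   f(1, t) = atan (1/(2t)) + atan (exp (-pi t)); monotonicity and the intermediate value
   theorem do the rest. *)

From Stdlib Require Import Reals ZArith Lra Lia.
From Coquelicot Require Import Coquelicot.
Open Scope R_scope.

(** * The imaginary part of log Gamma as a series of arctangents *)

Lemma Arg_re_pos x y : 0 < x -> Arg (x, y) = atan (y / x).
Proof. intros Hx; unfold Arg; simpl; destruct (Rlt_dec 0 x); [reflexivity | lra]. Qed.

Lemma atan_div_pos x y : 0 < x -> 0 < y -> atan (y / x) = PI / 2 - atan (x / y).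
Proof.
  intros Hx Hy; replace (y / x) with (/ (x / y)) by (field; lra).
  apply atan_inv, Rdiv_lt_0_compat; lra.
Qed.

Lemma Arg_im_pos x y : 0 < y -> Arg (x, y) = PI / 2 - atan (x / y).
Proof.
  intros Hy; unfold Arg; simpl.
  destruct (Rlt_dec 0 x) as [Hx | Hx]; [now apply atan_div_pos |].
  destruct (Rlt_dec x 0) as [Hx' | Hx'].
  - destruct (Rle_dec 0 y) as [_ | Hy']; [| lra].
    replace (y / x) with (- (y / - x)) by (field; lra).
    replace (x / y) with (- (- x / y)) by (field; lra).
    rewrite !atan_opp, atan_div_pos by lra; lra.
  - replace x with 0 by lra; destruct (Rlt_dec 0 y); [| lra].
    unfold Rdiv; rewrite Rmult_0_l, atan_0; lra.
Qed.

Definition lnGamma_im_term (y c : R) (n : nat) : R :=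
  y * ln (1 + / INR (S n)) - atan (y / (INR (S n) + c)).

Lemma snd_lnGamma_term c y n : -1 < c ->
  snd (lnGamma_term (c, y) n) = lnGamma_im_term y c n.
Proof.
  intros Hc; unfold lnGamma_term, lnGamma_im_term, Clog.
  assert (Hk : 1 <= INR (S n)) by (apply (le_INR 1); lia).
  set (k := INR (S n)) in *.
  replace (Cplus 1 (Cmult (c, y) (RtoC (/ k)))) with ((k + c) / k, y / k)
    by (apply injective_projections; simpl; field; lra).
  rewrite Arg_re_pos by (apply Rdiv_lt_0_compat; lra).
  replace (y / k / ((k + c) / k)) with (y / (k + c)) by (field; lra).
  simpl; ring.
Qed.

Lemma snd_lnGamma c y : 0 < y -> -1 < c ->
  snd (lnGamma (c, y)) = atan (c / y) - PI / 2 + Series (lnGamma_im_term y c).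
Proof.
  intros Hy Hc; unfold lnGamma, Clog; simpl.
  rewrite Arg_im_pos by lra.
  rewrite (Series_ext _ (lnGamma_im_term y c)) by (intros n; now apply snd_lnGamma_term).
  ring.
Qed.

Lemma is_series_telescope (a : nat -> R) (l : R) :
  is_lim_seq a l -> is_series (fun n => a n - a (S n)) (a O - l).
Proof.
  intros Ha; apply is_series_Reals.
  apply (Un_cv_ext (fun n => a O - a (S n))).
  { intros n; induction n as [| n IH]; simpl in *; [ring | rewrite <- IH; ring]. }
  apply is_lim_seq_Reals, (is_lim_seq_minus' _ _ (a O) l).
  - apply is_lim_seq_const.
  - now apply (is_lim_seq_incr_1 a l).
Qed.

Lemma Series_nonneg (a : nat -> R) : (forall n, 0 <= a n) -> ex_series a -> 0 <= Series a.
Proof.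
  intros Ha Hex.
  replace 0 with (Series (fun _ => 0)).
  { apply Series_le; [intros n; split; [lra | apply Ha] | exact Hex]. }
  unfold Series; rewrite (Lim_seq_ext _ (fun _ => 0)), Lim_seq_const; [reflexivity |].
  intros n; apply (sum_n_m_const_zero (G := R_AbelianMonoid)).
Qed.

Lemma is_lim_seq_inv_INR_S : is_lim_seq (fun n => / INR (S n)) 0.
Proof.
  replace (Finite 0) with (Rbar_inv p_infty) by reflexivity.
  apply is_lim_seq_inv; [| discriminate].
  apply (is_lim_seq_incr_1 INR p_infty), is_lim_seq_INR.
Qed.

Lemma ex_series_inv_sq : ex_series (fun n => / INR (S n) ^ 2).
Proof.
  apply (@ex_series_le R_AbsRing R_CompleteNormedModule _
           (fun n => 2 * / INR (S n) - 2 * / INR (S (S n)))).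
  - intros n; rewrite S_INR with (n := S n).
    assert (Hk : 1 <= INR (S n)) by (apply (le_INR 1); lia).
    set (k := INR (S n)) in *; change (Rabs (/ k ^ 2) <= 2 * / k - 2 * / (k + 1)).
    rewrite Rabs_pos_eq by (apply Rlt_le, Rinv_0_lt_compat, pow_lt; lra).
    apply Rmult_le_reg_r with (k ^ 2 * (k + 1)); [nra |].
    field_simplify; nra.
  - eexists; apply (is_series_telescope (fun n => 2 * / INR (S n)) (2 * 0)).
    apply (is_lim_seq_scal_l _ 2 0), is_lim_seq_inv_INR_S.
Qed.

Lemma atan_sub_bounds a b : 0 <= b <= a ->
  (a - b) / (1 + a ^ 2) <= atan a - atan b <= (a - b) / (1 + b ^ 2).
Proof.
  intros Hab; destruct (Req_dec a b) as [-> | Hne].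
  { unfold Rdiv; rewrite !Rminus_diag, !Rmult_0_l; lra. }
  destruct (MVT_cor2 atan (fun u => / (1 + u ^ 2)) b a) as [c [Hc Hbc]]; [lra | |].
  { intros; apply derivable_pt_lim_atan. }
  rewrite Hc; unfold Rdiv; rewrite (Rmult_comm (/ _)).
  split; apply Rmult_le_compat_l; try lra; apply Rinv_le_contravar; try nra.
Qed.

Lemma id_sub_atan_bound u : 0 <= u -> 0 <= u - atan u <= u ^ 3.
Proof.
  intros Hu; destruct (atan_sub_bounds u 0) as [Hlo Hhi]; [lra |].
  rewrite atan_0, Rminus_0_r in Hlo, Hhi.
  replace (u / (1 + 0 ^ 2)) with u in Hhi by field.
  assert (u / (1 + u ^ 2) = u - u ^ 3 / (1 + u ^ 2)) by (field; nra).
  assert (u ^ 3 / (1 + u ^ 2) <= u ^ 3).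
  { apply Rmult_le_reg_r with (1 + u ^ 2); [nra |].
    field_simplify; [| nra]. assert (0 <= u ^ 5) by (apply pow_le; lra). nra. }
  lra.
Qed.

Lemma id_sub_ln_bound x : 0 <= x -> 0 <= x - ln (1 + x) <= x ^ 2.
Proof.
  intros Hx; split.
  - rewrite <- (ln_exp x) at 1.
    enough (ln (1 + x) <= ln (exp x)) by lra.
    apply ln_le; [lra | apply exp_ineq1_le].
  - pose proof (exp_ineq1_le (ln (/ (1 + x)))) as H.
    rewrite exp_ln, ln_Rinv in H by (try apply Rinv_0_lt_compat; lra).
    assert (x - x ^ 2 <= 1 - / (1 + x)).
    { apply Rmult_le_reg_r with (1 + x); [lra |]. field_simplify; nra. }
    lra.
Qed.

Lemma lnGamma_im_term_bound y c n : 0 < y -> -1/2 <= c ->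
  Rabs (lnGamma_im_term y c n) <= (y + 2 * y * Rabs c + 8 * y ^ 3) / INR (S n) ^ 2.
Proof.
  intros Hy Hc; unfold lnGamma_im_term.
  assert (Hk : 1 <= INR (S n)) by (apply (le_INR 1); lia).
  set (k := INR (S n)) in *.
  set (u := y / (k + c)).
  assert (Hu : 0 <= u <= 2 * y / k).
  { split; [apply Rlt_le, Rdiv_lt_0_compat; lra |].
    apply Rmult_le_reg_r with ((k + c) * k); [nra |]. unfold u; field_simplify; nra. }
  destruct (id_sub_ln_bound (/ k)) as [Hl1 Hl2]; [apply Rlt_le, Rinv_0_lt_compat; lra |].
  destruct (id_sub_atan_bound u) as [Ha1 Ha2]; [lra |].
  assert (Hu3 : u ^ 3 <= 8 * y ^ 3 / k ^ 2).
  { apply Rle_trans with ((2 * y / k) ^ 3); [apply pow_incr; lra |].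
    apply Rmult_le_reg_r with (k ^ 3); [apply pow_lt; lra |].
    field_simplify; try lra. assert (0 < y ^ 3) by (apply pow_lt; lra). nra. }
  assert (Hmid : Rabs (y / k - u) <= 2 * y * Rabs c / k ^ 2).
  { replace (y / k - u) with (y * c / (k * (k + c))) by (unfold u; field; lra).
    unfold Rdiv; rewrite !Rabs_mult, Rabs_inv, (Rabs_pos_eq y), (Rabs_pos_eq (k * (k + c))) by nra.
    assert (Hinv2 : / (k * (k + c)) <= 2 * / k ^ 2).
    { replace (2 * / k ^ 2) with (/ (k ^ 2 / 2)) by (field; lra).
      apply Rinv_le_contravar; nra. }
    replace (2 * y * Rabs c * / k ^ 2) with (y * Rabs c * (2 * / k ^ 2)) by ring.
    apply Rmult_le_compat_l; [apply Rmult_le_pos; [lra | apply Rabs_pos] | exact Hinv2]. }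
  replace (y * ln (1 + / k) - atan u) with (- y * (/ k - ln (1 + / k)) + (y / k - u) + (u - atan u))
    by (unfold Rdiv; ring).
  unfold Rdiv in *.
  assert (Hinv : (/ k) ^ 2 = / k ^ 2) by (field; lra).
  eapply Rle_trans; [apply Rabs_triang |].
  eapply Rle_trans; [apply Rplus_le_compat_r, Rabs_triang |].
  rewrite (Rabs_pos_eq (u - atan u)) by lra.
  rewrite Rabs_mult, Rabs_Ropp, (Rabs_pos_eq y), (Rabs_pos_eq (/ k - _)) by lra.
  rewrite Hinv in Hl2. nra.
Qed.

Lemma ex_series_lnGamma_im_term y c : 0 < y -> -1/2 <= c -> ex_series (lnGamma_im_term y c).
Proof.
  intros Hy Hc.
  apply (@ex_series_le R_AbsRing R_CompleteNormedModule _
           (fun n => (y + 2 * y * Rabs c + 8 * y ^ 3) * / INR (S n) ^ 2)).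
  - intros n; apply lnGamma_im_term_bound; lra.
  - exact (@ex_series_scal_l R_AbsRing R_NormedModule _ _ ex_series_inv_sq).
Qed.

Definition atan_step (y c : R) (k : nat) : R :=
  atan ((INR k + c + 1/2) / y) - atan ((INR k + c) / y).

Lemma atan_step_S y c n : 0 < y -> -1/2 <= c ->
  atan_step y c (S n) = lnGamma_im_term y (c + 1/2) n - lnGamma_im_term y c n.
Proof.
  intros Hy Hc; unfold atan_step, lnGamma_im_term.
  assert (Hk : 1 <= INR (S n)) by (apply (le_INR 1); lia).
  rewrite !(atan_div_pos _ y), Rplus_assoc by lra; ring.
Qed.

Lemma ex_series_atan_step y c : 0 < y -> -1/2 <= c -> ex_series (atan_step y c).
Proof.
  intros Hy Hc; apply ex_series_incr_1.
  apply (ex_series_ext (fun n => lnGamma_im_term y (c + 1/2) n - lnGamma_im_term y c n)).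
  { intros n; symmetry; now apply atan_step_S. }
  apply (@ex_series_minus R_AbsRing R_NormedModule); apply ex_series_lnGamma_im_term; lra.
Qed.

Lemma snd_lnGamma_shift_half y c : 0 < y -> -1/2 <= c ->
  snd (lnGamma (c + 1/2, y)) - snd (lnGamma (c, y)) = Series (atan_step y c).
Proof.
  intros Hy Hc.
  rewrite Series_incr_1 by now apply ex_series_atan_step.
  rewrite (Series_ext _ (fun n => lnGamma_im_term y (c + 1/2) n - lnGamma_im_term y c n))
    by (intros n; now apply atan_step_S).
  rewrite Series_minus by (apply ex_series_lnGamma_im_term; lra).
  rewrite !snd_lnGamma by lra.
  unfold atan_step; simpl INR; rewrite !Rplus_0_l; ring.
Qed.

Lemma fsig_atan_series s t : 0 < t -> s <= 3/2 ->
  fsig s t = - (PI / 4) + Series (atan_step (t / 2) (1/4 - s/2)).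
Proof.
  intros Ht Hs; unfold fsig, kappa.
  rewrite <- snd_lnGamma_shift_half by lra.
  replace (1 * t / 2) with (t / 2) by field.
  replace (1/4 - s/2 + 1/2) with (3/4 - s/2) by field; ring.
Qed.

(** * Summation of the series at sigma = 0 *)

Lemma sin_bounds a : 0 <= a <= 4 -> a - a ^ 3 / 6 <= sin a <= a.
Proof.
  intros Ha; destruct (pre_sin_bound a 0) as [Hlo Hhi]; try lra.
  replace (sin_approx a (2 * 0 + 1)) with (a - a ^ 3 / 6) in Hlo
    by (unfold sin_approx, sin_term; simpl; field).
  replace (sin_approx a (2 * (0 + 1))) with (a - a ^ 3 / 6 + a ^ 3 * a ^ 2 / 120) in Hhi
    by (unfold sin_approx, sin_term; simpl; field).
  assert (0 <= a ^ 3) by (apply pow_le; lra).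
  assert (a ^ 2 <= 16) by nra.
  split; [lra | nra].
Qed.

Lemma nonneg_of_deriv_nonneg (f df : R -> R) x : 0 <= x -> f 0 = 0 ->
  (forall u, is_derive f u (df u)) -> (forall u, 0 <= u <= x -> 0 <= df u) -> 0 <= f x.
Proof.
  intros Hx H0 Hd Hpos.
  destruct (Req_dec x 0) as [-> | Hx0]; [lra |].
  destruct (MVT_cor2 f df 0 x) as [c [Hc Hc']]; [lra | |].
  { intros c _; apply is_derive_Reals, Hd. }
  assert (0 <= df c) by (apply Hpos; lra). nra.
Qed.

Lemma cosh_ge_1 u : 1 <= cosh u.
Proof.
  unfold cosh; rewrite exp_Ropp.
  pose proof (exp_pos u); pose proof (pow2_ge_0 (exp u - 1)).
  apply Rmult_le_reg_r with (2 * exp u); [lra |]. field_simplify; nra.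
Qed.

Lemma cosh_le_2 u : 0 <= u <= 1 -> cosh u <= 2.
Proof.
  intros Hu; unfold cosh.
  assert (exp u <= 3).
  { destruct (Req_dec u 1) as [-> | Hu1]; [apply exp_le_3 |].
    pose proof (exp_increasing u 1); pose proof exp_le_3; lra. }
  assert (exp (- u) <= 1).
  { destruct (Req_dec u 0) as [-> | Hu0]; [rewrite Ropp_0, exp_0; lra |].
    rewrite <- exp_0; apply Rlt_le, exp_increasing; lra. }
  lra.
Qed.

Lemma sinh_cosh_bounds b : 0 <= b <= 1 ->
  (b <= sinh b <= b + b ^ 3) /\ (1 <= cosh b <= 1 + b ^ 2).
Proof.
  intros Hb.
  assert (Hsinh2 : forall u, 0 <= u <= 1 -> sinh u <= 2 * u).
  { intros u Hu; enough (0 <= 2 * u - sinh u) by lra.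
    apply (nonneg_of_deriv_nonneg (fun v => 2 * v - sinh v) (fun v => 2 - cosh v));
      [lra | rewrite sinh_0; ring | |].
    - intros v; unfold sinh, cosh; auto_derive; [exact I | field].
    - intros v Hv; pose proof (cosh_le_2 v ltac:(lra)); lra. }
  assert (Hcosh : forall u, 0 <= u <= 1 -> cosh u <= 1 + u ^ 2).
  { intros u Hu; enough (0 <= 1 + u ^ 2 - cosh u) by lra.
    apply (nonneg_of_deriv_nonneg (fun v => 1 + v ^ 2 - cosh v) (fun v => 2 * v - sinh v));
      [lra | rewrite cosh_0; ring | |].
    - intros v; unfold sinh, cosh; auto_derive; [exact I | field].
    - intros v Hv; pose proof (Hsinh2 v ltac:(lra)); lra. }
  split; split; [| | apply cosh_ge_1 | now apply Hcosh].
  - enough (0 <= sinh b - b) by lra.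
    apply (nonneg_of_deriv_nonneg (fun v => sinh v - v) (fun v => cosh v - 1));
      [lra | rewrite sinh_0; ring | |].
    + intros v; unfold sinh, cosh; auto_derive; [exact I | field].
    + intros v _; pose proof (cosh_ge_1 v); lra.
  - enough (0 <= b + b ^ 3 - sinh b) by lra.
    apply (nonneg_of_deriv_nonneg (fun v => v + v ^ 3 - sinh v) (fun v => 1 + 3 * v ^ 2 - cosh v));
      [lra | rewrite sinh_0; ring | |].
    + intros v; unfold sinh, cosh; auto_derive; [exact I | field].
    + intros v Hv; pose proof (Hcosh v ltac:(lra)); pose proof (pow2_ge_0 v); lra.
Qed.

Lemma poisson_numerator_bound a b p c s :
  0 < a <= 2 -> 0 < b <= 1 -> b <= p <= b + b ^ 3 -> 1 <= c <= 1 + b ^ 2 ->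
  a - a ^ 3 / 6 <= s <= a ->
  Rabs (b * (p ^ 2 + s ^ 2) - p * c * (a ^ 2 + b ^ 2)) <= 3 * b * (a ^ 2 + b ^ 2) ^ 2.
Proof.
  intros Ha Hb Hp Hc Hs.
  replace (b * (p ^ 2 + s ^ 2) - p * c * (a ^ 2 + b ^ 2))
    with (p * b * (p - c * b) + a ^ 2 * (b - p * c) + b * (s ^ 2 - a ^ 2)) by ring.
  assert (Hb2 : b ^ 2 <= 1) by nra.
  assert (Hb3 : 0 <= b ^ 3) by (apply pow_le; lra).
  assert (Hp2 : p <= 2 * b) by nra.
  assert (H1 : - b ^ 3 <= p - c * b <= b ^ 3) by (split; nra).
  assert (H2 : 0 <= p * c - b <= 3 * b ^ 3).
  { split; [nra |].
    assert (p * c <= (b + b ^ 3) * (1 + b ^ 2)) by (apply Rmult_le_compat; nra).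
    assert (b ^ 3 * b ^ 2 <= b ^ 3)
      by (rewrite <- (Rmult_1_r (b ^ 3)) at 2; apply Rmult_le_compat_l; lra).
    nra. }
  assert (H3 : 0 <= a ^ 2 - s ^ 2 <= a ^ 4 / 3).
  { assert (a / 3 <= s) by nra. split; [nra |].
    assert ((a - s) * (a + s) <= (a ^ 3 / 6) * (2 * a)) by (apply Rmult_le_compat; nra).
    nra. }
  apply Rabs_le.
  assert (0 <= p * b) by nra.
  assert (- (p * b * b ^ 3) <= p * b * (p - c * b) <= p * b * b ^ 3) by (split; nra).
  assert (p * b * b ^ 3 <= 2 * b ^ 5) by nra.
  assert (0 <= a ^ 2 * (p * c - b) <= a ^ 2 * (3 * b ^ 3)) by (split; nra).
  assert (0 <= b * (a ^ 2 - s ^ 2) <= b * (a ^ 4 / 3)) by (split; nra).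
  assert (2 * b ^ 5 + 3 * a ^ 2 * b ^ 3 + b * a ^ 4 / 3 <= 3 * b * (a ^ 2 + b ^ 2) ^ 2).
  { assert (0 <= a ^ 2 * b ^ 3) by nra. assert (0 <= b * a ^ 4) by nra. nra. }
  split; nra.
Qed.

Lemma poisson_kernel_approx a b p c s :
  0 < a <= 2 -> 0 < b <= 1 -> b <= p <= b + b ^ 3 -> 1 <= c <= 1 + b ^ 2 ->
  a - a ^ 3 / 6 <= s <= a ->
  Rabs (b / (a ^ 2 + b ^ 2) - p * c / (p ^ 2 + s ^ 2)) <= 27 * b.
Proof.
  intros Ha Hb Hp Hc Hs.
  pose proof (poisson_numerator_bound a b p c s Ha Hb Hp Hc Hs) as HX.
  set (D1 := a ^ 2 + b ^ 2) in *; set (D2 := p ^ 2 + s ^ 2) in *.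
  assert (HD1 : 0 < D1) by (unfold D1; nra).
  assert (HD2 : D1 / 9 <= D2) by (assert (a / 3 <= s) by nra; unfold D1, D2; nra).
  replace (b / D1 - p * c / D2) with ((b * D2 - p * c * D1) / (D1 * D2)) by (field; lra).
  unfold Rdiv; rewrite Rabs_mult, Rabs_inv, (Rabs_pos_eq (D1 * D2)) by nra.
  apply Rmult_le_reg_r with (D1 * D2); [nra |].
  rewrite Rmult_assoc, Rinv_l, Rmult_1_r by nra.
  assert (D1 ^ 2 <= 9 * (D1 * D2)) by nra.
  apply Rle_trans with (3 * b * D1 ^ 2); [exact HX | nra].
Qed.

Lemma atan_add x y : x * y <= 0 -> atan x + atan y = atan ((x + y) / (1 - x * y)).
Proof.
  intros Hxy.
  pose proof (atan_bound x) as Hx; pose proof (atan_bound y) as Hy.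
  assert (Hsum : - (PI / 2) < atan x + atan y < PI / 2).
  { destruct (Rle_dec 0 x) as [Hx0 | Hx0]; destruct (Rle_dec 0 y) as [Hy0 | Hy0].
    - assert (x = 0 \/ y = 0) as [-> | ->] by nra; rewrite atan_0; lra.
    - pose proof (atan_increasing 0 x); pose proof (atan_increasing y 0).
      destruct (Req_dec x 0) as [-> | ]; rewrite atan_0 in *; lra.
    - pose proof (atan_increasing x 0); pose proof (atan_increasing 0 y).
      destruct (Req_dec y 0) as [-> | ]; rewrite atan_0 in *; lra.
    - nra. }
  assert (Hcos : forall u, - (PI / 2) < u < PI / 2 -> cos u <> 0)
    by (intros u Hu; apply Rgt_not_eq, cos_gt_0; lra).
  rewrite <- (atan_tan (atan x + atan y)) by lra.
  f_equal; rewrite tan_plus, !tan_atan; [reflexivity | apply Hcos; lra .. | rewrite !tan_atan; lra].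
Qed.

(* [sin_phase a b] is the argument of [1 - exp (-2 i z)] = [2 i exp (-i z) sin z], [z = a - i b];
   the factorisation [1 - w ^ 2 = (1 - w) (1 + w)] gives [sin_phase_double]. *)
Definition sin_phase (a b : R) : R := atan (sin (2 * a) / (exp (2 * b) - cos (2 * a))).

Lemma is_derive_sin_phase a b : 0 < b ->
  is_derive (fun a => sin_phase a b) a (sinh b * cosh b / (sinh b ^ 2 + sin a ^ 2) - 1).
Proof.
  intros Hb; unfold sin_phase.
  assert (Hu : 1 < exp b) by (pose proof (exp_ineq1 b); lra).
  assert (HE : exp (2 * b) = exp b ^ 2)
    by (replace (2 * b) with (b + b) by ring; rewrite exp_plus; ring).
  assert (Hc : cos (2 * a) = 1 - 2 * sin a ^ 2) by (rewrite cos_2a_sin; ring).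
  assert (Hs : sin (2 * a) ^ 2 = 4 * sin a ^ 2 * (1 - sin a ^ 2)).
  { rewrite sin_2a; pose proof (sin2_cos2 a) as H; unfold Rsqr in H.
    replace ((2 * sin a * cos a) ^ 2) with (4 * sin a ^ 2 * (cos a * cos a)) by ring.
    replace (cos a * cos a) with (1 - sin a * sin a) by lra; ring. }
  assert (0 <= sin a ^ 2) by apply pow2_ge_0.
  auto_derive; [rewrite HE, Hc; nra |].
  assert (Hsinh : 0 < sinh b) by (rewrite <- sinh_0; apply sinh_lt; lra).
  assert (HEc : 0 < exp (2 * b) - cos (2 * a)) by (rewrite HE, Hc; nra).
  field_simplify.
  - rewrite Hs, Hc, HE; unfold sinh, cosh; rewrite exp_Ropp.
    field; split; [lra |].
    assert (0 < exp b * exp b - 1) by nra. nra.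
  - nra.
  - split; [lra |]. pose proof (Rle_0_sqr (sin (2 * a))); unfold Rsqr in *; nra.
Qed.

Lemma sin_phase_double a b : 0 < b ->
  sin_phase (2 * a) (2 * b) = sin_phase a b + sin_phase (a + PI / 2) b.
Proof.
  intros Hb; unfold sin_phase.
  replace (2 * (a + PI / 2)) with (2 * a + PI) by field.
  rewrite neg_sin, neg_cos.
  replace (2 * (2 * b)) with (2 * b + 2 * b) by ring; rewrite exp_plus.
  rewrite (sin_2a (2 * a)), (cos_2a (2 * a)).
  set (s := sin (2 * a)); set (c := cos (2 * a)); set (E := exp (2 * b)).
  assert (HE : 1 < E) by (pose proof (exp_ineq1 (2 * b)); unfold E; lra).
  assert (Hc := COS_bound (2 * a)); fold c in Hc.
  assert (0 <= s * s) by nra.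
  rewrite atan_add.
  - f_equal; field; repeat split; nra.
  - replace (s / (E - c) * (- s / (E - - c))) with (- (s * s) / ((E - c) * (E + c)))
      by (field; lra).
    unfold Rdiv; assert (0 < / ((E - c) * (E + c))) by (apply Rinv_0_lt_compat; nra). nra.
Qed.

Lemma sin_phase_periodic a b : sin_phase (a + PI) b = sin_phase a b.
Proof.
  unfold sin_phase; replace (2 * (a + PI)) with (2 * a + PI + PI) by ring.
  rewrite !neg_sin, !neg_cos, !Ropp_involutive; reflexivity.
Qed.

Lemma sin_phase_opp a b : sin_phase (- a) b = - sin_phase a b.
Proof.
  unfold sin_phase; replace (2 * - a) with (- (2 * a)) by ring.
  rewrite sin_neg, cos_neg, <- atan_opp; f_equal; unfold Rdiv; ring.
Qed.

(* [sum_f_R0 f n] has [n + 1] terms, hence the [pred]s. *)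
Lemma sum_f_R0_split_half (f : nat -> R) M : (0 < M)%nat ->
  sum_f_R0 f (pred (2 * M)) = sum_f_R0 (fun k => f k + f (M + k)%nat) (pred M).
Proof.
  intros HM; rewrite (tech2 f (pred M) (pred (2 * M))) by lia.
  replace (S (pred M)) with M by lia; replace (pred (2 * M) - M)%nat with (pred M) by lia.
  symmetry; apply sum_plus.
Qed.

Lemma pow2_pos m : (0 < 2 ^ m)%nat.
Proof. apply Nat.neq_0_lt_0, Nat.pow_nonzero; lia. Qed.

Lemma INR_pow2 m : INR (2 ^ m) = 2 ^ m.
Proof. rewrite pow_INR; reflexivity. Qed.

Lemma sin_phase_pow2 m a b : 0 < b ->
  sin_phase (2 ^ m * a) (2 ^ m * b) =
  sum_f_R0 (fun k => sin_phase (a + INR k * PI / 2 ^ m) b) (pred (2 ^ m)).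
Proof.
  revert a b; induction m as [| m IH]; intros a b Hb.
  - simpl; rewrite !Rmult_1_l; f_equal; field.
  - assert (HM : 0 < 2 ^ m) by (apply pow_lt; lra).
    change (2 ^ S m) with (2 * 2 ^ m); change (2 ^ S m)%nat with (2 * 2 ^ m)%nat.
    rewrite sum_f_R0_split_half by apply pow2_pos.
    replace (2 * 2 ^ m * a) with (2 ^ m * (2 * a)) by ring.
    replace (2 * 2 ^ m * b) with (2 ^ m * (2 * b)) by ring.
    rewrite IH by lra; apply sum_eq; intros k _.
    replace (2 * a + INR k * PI / 2 ^ m) with (2 * (a + INR k * PI / (2 * 2 ^ m))) by (field; lra).
    rewrite sin_phase_double by lra; f_equal; f_equal.
    rewrite plus_INR, INR_pow2; field; lra.
Qed.

Lemma sin_phase_quarter_sum m y : 0 < y ->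
  sin_phase (PI / 4) (PI * y) =
  sum_f_R0 (fun k => sin_phase (PI * (INR k + 1/4) / 2 ^ S m) (PI * y / 2 ^ S m)
                   - sin_phase (PI * (INR k + 3/4) / 2 ^ S m) (PI * y / 2 ^ S m))
           (pred (2 ^ m)).
Proof.
  intros Hy.
  assert (HM : 0 < 2 ^ m) by (apply pow_lt; lra).
  assert (HPI := PI_RGT_0).
  set (N := 2 ^ S m); set (beta := PI * y / N).
  assert (HN : N = 2 * 2 ^ m) by reflexivity.
  replace (sin_phase (PI / 4) (PI * y)) with (sin_phase (N * (PI / (4 * N))) (N * beta))
    by (unfold beta; f_equal; field; lra).
  unfold N; rewrite sin_phase_pow2 by (apply Rdiv_lt_0_compat; [nra | lra]); fold N.
  change (2 ^ S m)%nat with (2 * 2 ^ m)%nat.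
  rewrite sum_f_R0_split_half by apply pow2_pos.
  unfold Rminus; rewrite !sum_plus; apply (f_equal2 Rplus).
  - apply sum_eq; intros k _; f_equal; field; lra.
  - rewrite <- (sum_f_R0_skip (fun k => - sin_phase (PI * (INR k + 3/4) / N) beta)).
    apply sum_eq; intros k Hk.
    rewrite <- sin_phase_opp, <- (sin_phase_periodic (- _)); f_equal.
    rewrite plus_INR, minus_INR, INR_pow2, HN by lia.
    rewrite <- Nat.sub_1_r, minus_INR, INR_pow2 by (pose proof (pow2_pos m); lia).
    simpl INR; field; lra.
Qed.

(* As [sin z ~ z] near [0], [sin_phase a b] is close to [atan (a / b) - a]. *)
Definition sin_phase_defect (a b : R) : R := atan (a / b) - a - sin_phase a b.

(* The [a]-derivative of the defect is the Poisson kernel of the line minus its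
   [PI]-periodisation. *)
Lemma sin_phase_defect_lipschitz a a' b : 0 < a -> a <= a' <= 2 -> 0 < b <= 1 ->
  Rabs (sin_phase_defect a' b - sin_phase_defect a b) <= 27 * b * (a' - a).
Proof.
  intros Ha Ha' Hb.
  destruct (Req_dec a a') as [<- | Hne]; [rewrite !Rminus_diag, Rabs_R0; lra |].
  set (kernel_gap := fun x => b / (x ^ 2 + b ^ 2) - sinh b * cosh b / (sinh b ^ 2 + sin x ^ 2)).
  destruct (MVT_cor2 (fun x => sin_phase_defect x b) kernel_gap a a') as [x [Hx Hax]]; [lra | |].
  { intros x _; apply is_derive_Reals; unfold sin_phase_defect, kernel_gap.
    replace (b / (x ^ 2 + b ^ 2) - sinh b * cosh b / (sinh b ^ 2 + sin x ^ 2))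
      with ((b / (x ^ 2 + b ^ 2) - 1) - (sinh b * cosh b / (sinh b ^ 2 + sin x ^ 2) - 1)) by ring.
    apply (is_derive_minus (fun x => atan (x / b) - x)); [| apply is_derive_sin_phase; lra].
    assert (0 < b ^ 2) by (apply pow_lt; lra); pose proof (pow2_ge_0 x).
    auto_derive; [lra |]. field; split; lra. }
  rewrite Hx, Rabs_mult, (Rabs_pos_eq (a' - a)) by lra.
  apply Rmult_le_compat_r; [lra |].
  destruct (sinh_cosh_bounds b) as [Hsinh Hcosh]; [lra |].
  apply poisson_kernel_approx; try lra; apply sin_bounds; lra.
Qed.

Lemma sin_phase_defect_node_bound m y k : 0 < y -> PI * y / 2 ^ S m <= 1 -> (k < 2 ^ m)%nat ->
  Rabs (sin_phase_defect (PI * (INR k + 3/4) / 2 ^ S m) (PI * y / 2 ^ S m)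
        - sin_phase_defect (PI * (INR k + 1/4) / 2 ^ S m) (PI * y / 2 ^ S m))
  <= 27 * (PI * y / 2 ^ S m) * (PI / (2 * 2 ^ S m)).
Proof.
  intros Hy Hbeta Hk.
  assert (HM : 0 < 2 ^ m) by (apply pow_lt; lra).
  assert (HPI := PI_RGT_0); assert (HPI4 := PI_4).
  assert (Hk1 : INR k + 1 <= 2 ^ m) by (rewrite <- INR_pow2, <- S_INR; apply le_INR; lia).
  assert (HN : 2 ^ S m = 2 * 2 ^ m) by reflexivity.
  replace (PI / (2 * 2 ^ S m)) with (PI * (INR k + 3/4) / 2 ^ S m - PI * (INR k + 1/4) / 2 ^ S m)
    by (field; lra).
  apply sin_phase_defect_lipschitz; [| split | split]; try lra.
  - apply Rdiv_lt_0_compat; [pose proof (pos_INR k); nra | lra].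
  - apply Rmult_le_compat_r; [apply Rlt_le, Rinv_0_lt_compat; lra |].
    apply Rmult_le_compat_l; lra.
  - apply Rmult_le_reg_r with (2 ^ S m); [lra |].
    unfold Rdiv; rewrite Rmult_assoc, Rinv_l, Rmult_1_r by lra.
    rewrite HN; nra.
  - apply Rdiv_lt_0_compat; nra.
Qed.

Lemma atan_step_quarter_partial_sum m y : 0 < y -> PI * y / 2 ^ S m <= 1 ->
  Rabs (sum_f_R0 (atan_step y (1/4)) (pred (2 ^ m)) - (PI / 4 - sin_phase (PI / 4) (PI * y)))
  <= 27 * (PI * y / 2 ^ S m).
Proof.
  intros Hy Hbeta.
  assert (HM : 0 < 2 ^ m) by (apply pow_lt; lra).
  assert (HPI := PI_RGT_0); assert (HPI4 := PI_4).
  rewrite (sin_phase_quarter_sum m y Hy).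
  set (N := 2 ^ S m) in *; set (beta := PI * y / N) in *.
  assert (HN : N = 2 * 2 ^ m) by reflexivity.
  assert (Hbeta0 : 0 < beta) by (unfold beta; apply Rdiv_lt_0_compat; nra).
  set (lo := fun k => PI * (INR k + 1/4) / N); set (hi := fun k => PI * (INR k + 3/4) / N).
  set (n := pred (2 ^ m)).
  assert (Hn : INR (S n) = 2 ^ m)
    by (unfold n; rewrite Nat.succ_pred_pos by apply pow2_pos; apply INR_pow2).
  (* Over the pair [lo k, hi k], [atan_step] is the length [PI / (2 N)] of the pair plus increments
     of the defect and of [sin_phase]; the lengths add up to [PI / 4]. *)
  assert (Hterm : forall k, atan_step y (1/4) k =
    PI / (2 * N) + (sin_phase_defect (hi k) beta - sin_phase_defect (lo k) beta)
    - (sin_phase (lo k) beta - sin_phase (hi k) beta)).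
  { intros k; unfold atan_step, sin_phase_defect, lo, hi, beta.
    replace (PI * (INR k + 3/4) / N / (PI * y / N)) with ((INR k + 1/4 + 1/2) / y) by (field; lra).
    replace (PI * (INR k + 1/4) / N / (PI * y / N)) with ((INR k + 1/4) / y) by (field; lra).
    field; lra. }
  rewrite (sum_eq _ _ n (fun k _ => Hterm k)), minus_sum, sum_plus, sum_cte, Hn.
  unfold lo, hi; cbv beta.
  match goal with |- Rabs (_ + ?D - ?P - (_ - ?P)) <= _ =>
    replace (PI / (2 * N) * 2 ^ m + D - P - (PI / 4 - P)) with D by (rewrite HN; field; lra) end.
  eapply Rle_trans; [apply Rsum_abs |].
  eapply Rle_trans.
  { apply (sum_Rle _ (fun _ => 27 * beta * (PI / (2 * N)))); intros k Hk.
    apply sin_phase_defect_node_bound; [exact Hy | exact Hbeta |].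
    pose proof (pow2_pos m); unfold n in Hk; lia. }
  rewrite sum_cte, Hn, HN; apply Rle_trans with (27 * beta * (PI / 4)); [right; field; lra |].
  nra.
Qed.

Lemma Series_atan_step_quarter y : 0 < y ->
  Series (atan_step y (1/4)) = PI / 4 - atan (exp (- (2 * PI * y))).
Proof.
  intros Hy; assert (HPI := PI_RGT_0).
  set (partial := fun m => sum_f_R0 (atan_step y (1/4)) (pred (2 ^ m))).
  set (T := PI / 4 - sin_phase (PI / 4) (PI * y)).
  set (err := fun m => 27 * (PI * y / 2 ^ S m)).
  assert (Herr : is_lim_seq err 0).
  { replace (Finite 0) with (Rbar_mult (27 * (PI * y / 2)) 0) by (simpl; f_equal; ring).
    apply (is_lim_seq_ext (fun m => 27 * (PI * y / 2) * (/ 2) ^ m)).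
    { intros m; unfold err; rewrite pow_inv; simpl; field; apply pow_nonzero; lra. }
    apply is_lim_seq_scal_l, is_lim_seq_geom; rewrite Rabs_pos_eq; lra. }
  assert (Hlim_series : is_lim_seq partial (Series (atan_step y (1/4)))).
  { apply (is_lim_seq_ext (fun m => sum_n (atan_step y (1/4)) (pred (2 ^ m))));
      [intros m; apply sum_n_Reals |].
    apply (is_lim_seq_subseq (sum_n (atan_step y (1/4)))).
    - intros P [N HN]; exists (S N); intros m Hm; apply HN.
      pose proof (Nat.pow_gt_lin_r 2 m ltac:(lia)); lia.
    - apply Series_correct, ex_series_atan_step; lra. }
  assert (Hlim_T : is_lim_seq partial T).
  { apply (is_lim_seq_le_le_loc (fun m => T - err m) partial (fun m => T + err m)).
    - apply is_lim_seq_spec in Herr; destruct (Herr (mkposreal 27 ltac:(lra))) as [N HN].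
      exists N; intros m Hm; specialize (HN m Hm); simpl in HN.
      unfold err in HN; rewrite Rminus_0_r, Rabs_pos_eq in HN
        by (apply Rmult_le_pos, Rlt_le, Rdiv_lt_0_compat; try apply pow_lt; nra).
      pose proof (atan_step_quarter_partial_sum m y Hy ltac:(lra)) as H.
      apply Rabs_le_between in H; unfold partial, err, T; lra.
    - replace (Finite T) with (Rbar_minus T 0) by (simpl; f_equal; ring).
      apply is_lim_seq_minus'; [apply is_lim_seq_const | exact Herr].
    - replace (Finite T) with (Rbar_plus T 0) by (simpl; f_equal; ring).
      apply is_lim_seq_plus'; [apply is_lim_seq_const | exact Herr]. }
  apply is_lim_seq_unique in Hlim_series, Hlim_T; rewrite Hlim_series in Hlim_T.
  injection Hlim_T as ->; unfold T, sin_phase.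
  replace (2 * (PI / 4)) with (PI / 2) by field; rewrite sin_PI2, cos_PI2, exp_Ropp.
  do 3 f_equal; rewrite Rminus_0_r, Rmult_assoc; unfold Rdiv; ring.
Qed.

(** * The values at sigma = 0 and sigma = 1 *)

Lemma is_lim_seq_atan_p_infty (u : nat -> R) :
  is_lim_seq u p_infty -> is_lim_seq (fun n => atan (u n)) (PI / 2).
Proof.
  intros Hu.
  apply (is_lim_seq_ext_loc (fun n => PI / 2 - atan (/ u n))).
  { apply (filter_imp (fun n => 0 < u n)); [| apply Hu; exists 0; auto].
    intros n Hn; rewrite atan_inv by lra; ring. }
  replace (Finite (PI / 2)) with (Rbar_minus (PI / 2) (atan 0))
    by (rewrite atan_0; simpl; f_equal; ring).
  apply is_lim_seq_minus'; [apply is_lim_seq_const |].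
  apply is_lim_seq_continuous; [apply derivable_continuous_pt, derivable_pt_atan |].
  replace (Finite 0) with (Rbar_inv p_infty) by reflexivity.
  apply is_lim_seq_inv; [exact Hu | discriminate].
Qed.

Lemma Series_atan_step_quarter_opp y : 0 < y ->
  Series (atan_step y (1/4)) + Series (atan_step y (-1/4)) = PI / 2 + atan (1 / (4 * y)).
Proof.
  intros Hy; rewrite <- Series_plus by (apply ex_series_atan_step; lra).
  apply is_series_unique.
  set (b := fun k => - atan ((INR k - 1/4) / y)).
  apply (is_series_ext (fun k => b k - b (S k))).
  { intros k; change (@eq R (b k - b (S k)) (atan_step y (1/4) k + atan_step y (-1/4) k)).
    unfold b, atan_step; rewrite S_INR.
    replace (INR k + 1 - 1/4) with (INR k + 1/4 + 1/2) by field.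
    replace (INR k + -1/4 + 1/2) with (INR k + 1/4) by field.
    replace (INR k + -1/4) with (INR k - 1/4) by field.
    ring. }
  replace (PI / 2 + atan (1 / (4 * y))) with (b O - - (PI / 2)).
  2:{ unfold b; simpl INR; replace ((0 - 1/4) / y) with (- (1 / (4 * y))) by (field; lra).
      rewrite atan_opp; ring. }
  apply is_series_telescope, (is_lim_seq_opp _ (PI / 2)), is_lim_seq_atan_p_infty.
  apply (is_lim_seq_mult _ _ p_infty (/ y)).
  - apply (is_lim_seq_minus _ _ p_infty (1/4));
      [apply is_lim_seq_INR | apply is_lim_seq_const | easy].
  - apply is_lim_seq_const.
  - apply is_Rbar_mult_p_infty_pos; simpl; apply Rinv_0_lt_compat, Hy.
Qed.

Lemma fsig_0 t : 0 < t -> fsig 0 t = - atan (exp (- (PI * t))).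
Proof.
  intros Ht; rewrite fsig_atan_series by lra.
  replace (1/4 - 0/2) with (1/4) by field.
  rewrite Series_atan_step_quarter by lra.
  replace (2 * PI * (t / 2)) with (PI * t) by field; ring.
Qed.

Lemma fsig_1 t : 0 < t -> fsig 1 t = atan (1 / (2 * t)) + atan (exp (- (PI * t))).
Proof.
  intros Ht; rewrite fsig_atan_series by lra.
  replace (1/4 - 1/2) with (-1/4) by field.
  pose proof (Series_atan_step_quarter_opp (t / 2)) as Hsum.
  rewrite Series_atan_step_quarter in Hsum by lra.
  replace (2 * PI * (t / 2)) with (PI * t) in Hsum by field.
  replace (4 * (t / 2)) with (2 * t) in Hsum by field.
  lra.
Qed.

Lemma atan_pos x : 0 < x -> 0 < atan x.
Proof. intros Hx; rewrite <- atan_0; now apply atan_increasing. Qed.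

Lemma atan_exp_neg_bounds t : 0 < t -> 0 < atan (exp (- (PI * t))) < PI / 4.
Proof.
  intros Ht; split; [apply atan_pos, exp_pos |].
  rewrite <- atan_1; apply atan_increasing.
  rewrite <- exp_0; apply exp_increasing; pose proof PI_RGT_0; nra.
Qed.

Lemma fsig_0_bounds t : 0 < t -> - (PI / 2) < fsig 0 t < 0.
Proof.
  intros Ht; rewrite fsig_0 by exact Ht.
  pose proof (atan_exp_neg_bounds t Ht); pose proof PI_RGT_0; lra.
Qed.

Lemma fsig_1_bounds t : 0 < t -> 0 < fsig 1 t < PI.
Proof.
  intros Ht; rewrite fsig_1 by exact Ht.
  pose proof (atan_exp_neg_bounds t Ht); pose proof (atan_bound (1 / (2 * t))).
  pose proof (atan_pos (1 / (2 * t)) ltac:(apply Rdiv_lt_0_compat; lra)); lra.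
Qed.

(** * Termwise differentiation in sigma *)

Definition atan_step_deriv (y c : R) (k : nat) : R :=
  (/ (1 + ((INR k + c + 1/2) / y) ^ 2) - / (1 + ((INR k + c) / y) ^ 2)) / y.

Lemma is_derive_atan_step y c k : 0 < y ->
  is_derive (fun c => atan_step y c k) c (atan_step_deriv y c k).
Proof.
  intros Hy; unfold atan_step, atan_step_deriv; auto_derive; [lra |].
  unfold Rdiv; simpl; ring.
Qed.

Lemma inv_1_add_sq_le y k z : 0 < y -> 0 <= k -> k <= 2 * Rabs z ->
  / (1 + (z / y) ^ 2) <= 2 * (1 + 4 * y ^ 2) / (k + 1) ^ 2.
Proof.
  intros Hy Hk Hkz.
  assert (Hk2 : k ^ 2 <= 4 * z ^ 2).
  { rewrite <- (pow2_abs z); replace (4 * Rabs z ^ 2) with ((2 * Rabs z) ^ 2) by ring.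
    apply pow_incr; lra. }
  assert (0 <= (z / y) ^ 2) by apply pow2_ge_0.
  assert (0 < (k + 1) ^ 2) by (apply pow_lt; lra).
  assert (Hzy : z ^ 2 = y ^ 2 * (z / y) ^ 2) by (field; lra).
  assert (0 < y ^ 2) by (apply pow_lt; lra).
  assert (0 <= z ^ 2) by apply pow2_ge_0.
  apply (Rmult_le_reg_l ((1 + (z / y) ^ 2) * (k + 1) ^ 2)); [nra |].
  replace ((1 + (z / y) ^ 2) * (k + 1) ^ 2 * / (1 + (z / y) ^ 2)) with ((k + 1) ^ 2)
    by (field; lra).
  replace ((1 + (z / y) ^ 2) * (k + 1) ^ 2 * (2 * (1 + 4 * y ^ 2) / (k + 1) ^ 2))
    with (2 * (1 + 4 * y ^ 2) * (1 + (z / y) ^ 2)) by (field; lra).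
  nra.
Qed.

Lemma atan_step_deriv_bound y c k : 0 < y -> -1/2 <= c ->
  Rabs (atan_step_deriv y c k) <= 2 * (1 + 4 * y ^ 2) / y / INR (S k) ^ 2.
Proof.
  intros Hy Hc; unfold atan_step_deriv; rewrite S_INR.
  assert (Hk : INR k = 0 \/ 1 <= INR k)
    by (destruct k; [left; reflexivity | right; apply (le_INR 1); lia]).
  set (K := 2 * (1 + 4 * y ^ 2) / (INR k + 1) ^ 2).
  assert (Hhi : / (1 + ((INR k + c + 1/2) / y) ^ 2) <= K).
  { apply inv_1_add_sq_le; [lra | apply pos_INR |].
    rewrite Rabs_pos_eq by (pose proof (pos_INR k); lra); lra. }
  assert (Hlo : / (1 + ((INR k + c) / y) ^ 2) <= K).
  { apply inv_1_add_sq_le; [lra | apply pos_INR |].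
    destruct Hk as [-> | Hk]; [apply Rmult_le_pos, Rabs_pos; lra |].
    rewrite Rabs_pos_eq; lra. }
  assert (0 < / (1 + ((INR k + c + 1/2) / y) ^ 2))
    by (apply Rinv_0_lt_compat; pose proof (pow2_ge_0 ((INR k + c + 1/2) / y)); lra).
  assert (0 < / (1 + ((INR k + c) / y) ^ 2))
    by (apply Rinv_0_lt_compat; pose proof (pow2_ge_0 ((INR k + c) / y)); lra).
  unfold Rdiv at 1; rewrite Rabs_mult, Rabs_inv, (Rabs_pos_eq y) by lra.
  replace (2 * (1 + 4 * y ^ 2) / y / (INR k + 1) ^ 2) with (K * / y)
    by (unfold K; field; split; lra).
  apply Rmult_le_compat_r; [apply Rlt_le, Rinv_0_lt_compat; lra |].
  apply Rabs_le; lra.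
Qed.

Lemma atan_step_deriv_neg y c k : 0 < y -> -1/4 < c -> atan_step_deriv y c k < 0.
Proof.
  intros Hy Hc; unfold atan_step_deriv.
  assert (Hk := pos_INR k).
  assert (((INR k + c) / y) ^ 2 < ((INR k + c + 1/2) / y) ^ 2).
  { unfold Rdiv; rewrite !Rpow_mult_distr.
    apply Rmult_lt_compat_r; [apply pow_lt, Rinv_0_lt_compat; lra | nra]. }
  assert (/ (1 + ((INR k + c + 1/2) / y) ^ 2) < / (1 + ((INR k + c) / y) ^ 2)).
  { apply Rinv_lt_contravar; [| lra].
    pose proof (pow2_ge_0 ((INR k + c) / y)); nra. }
  unfold Rdiv; apply Rmult_neg_pos; [lra | apply Rinv_0_lt_compat; lra].
Qed.

Lemma is_derive_sum_f_R0 (f df : nat -> R -> R) n x :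
  (forall k, is_derive (f k) x (df k x)) ->
  is_derive (fun x => sum_f_R0 (fun k => f k x) n) x (sum_f_R0 (fun k => df k x) n).
Proof.
  intros H; rewrite <- sum_n_Reals.
  apply (is_derive_ext (fun x => sum_n (fun k => f k x) n)); [intros; apply sum_n_Reals |].
  apply (@is_derive_sum_n R_AbsRing R_NormedModule); auto.
Qed.

Lemma is_derive_Series_atan_step y c : 0 < y -> Rabs c < 1/2 ->
  is_derive (fun c => Series (atan_step y c)) c (Series (atan_step_deriv y c)).
Proof.
  intros Hy Hc.
  set (bound := fun k => 2 * (1 + 4 * y ^ 2) / y / INR (S k) ^ 2).
  assert (Hbound : forall k, 0 <= bound k).
  { intros k; unfold bound; apply Rmult_le_pos.
    - apply Rmult_le_pos; [nra | apply Rlt_le, Rinv_0_lt_compat; lra].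
    - apply Rlt_le, Rinv_0_lt_compat, pow_lt, lt_0_INR; lia. }
  assert (Hhalf : 0 < 1/2) by lra.
  assert (Hcvn : CVN_r (fun k c => atan_step_deriv y c k) (mkposreal _ Hhalf)).
  { exists bound, (Series bound); split.
    - apply (Un_cv_ext (sum_f_R0 bound)).
      { intros n; apply sum_eq; intros k _; symmetry; apply Rabs_pos_eq, Hbound. }
      apply is_series_Reals, Series_correct.
      exact (@ex_series_scal_l R_AbsRing R_NormedModule _ _ ex_series_inv_sq).
    - intros k c' Hc'; unfold Boule in Hc'; simpl in Hc'; rewrite Rminus_0_r in Hc'.
      apply atan_step_deriv_bound; [lra | apply Rabs_def2 in Hc'; lra]. }
  (* [CVN_CVU_r] gives uniform convergence on a ball of unknown radius around [c]; shrink it into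
     [Rabs c < 1/2], where the series of [atan_step] is known to converge. *)
  destruct (CVN_CVU_r _ _ Hcvn c Hc) as [e He].
  assert (He' : 0 < Rmin e (1/2 - Rabs c)) by (apply Rmin_glb_lt; [apply cond_pos | lra]).
  set (e' := mkposreal _ He').
  assert (Hball : forall x, Boule c e' x -> Rabs x < 1/2).
  { intros x Hx; unfold Boule in Hx; simpl in Hx.
    pose proof (Rmin_r e (1/2 - Rabs c)); pose proof (Rabs_triang_inv x c); lra. }
  apply is_derive_Reals.
  apply (CVU_derivable (SP (fun k c => atan_step y c k)) (SP (fun k c => atan_step_deriv y c k))
           (fun c => Series (atan_step y c)) (fun c => Series (atan_step_deriv y c)) c e').
  - intros eps Heps; destruct (He eps Heps) as [N HN]; exists N.
    intros n x Hn Hx; apply HN; [exact Hn |].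
    unfold Boule in *; simpl in Hx; pose proof (Rmin_l e (1/2 - Rabs c)); lra.
  - intros x Hx; apply is_series_Reals, Series_correct, ex_series_atan_step; [lra |].
    apply Hball, Rabs_def2 in Hx; lra.
  - intros n x _; apply is_derive_Reals, is_derive_sum_f_R0.
    intros k; apply is_derive_atan_step; lra.
  - unfold Boule; rewrite Rminus_diag, Rabs_R0; apply cond_pos.
Qed.

Lemma Series_atan_step_deriv_neg y c : 0 < y -> -1/4 < c < 1/2 ->
  Series (atan_step_deriv y c) < 0.
Proof.
  intros Hy Hc.
  assert (Hex : ex_series (atan_step_deriv y c)).
  { apply (@ex_series_le R_AbsRing R_CompleteNormedModule _
             (fun k => 2 * (1 + 4 * y ^ 2) / y * / INR (S k) ^ 2)).
    - intros k; apply atan_step_deriv_bound; lra.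
    - exact (@ex_series_scal_l R_AbsRing R_NormedModule _ _ ex_series_inv_sq). }
  rewrite Series_incr_1 by exact Hex.
  assert (Htail : 0 <= Series (fun k => - atan_step_deriv y c (S k))).
  { apply Series_nonneg.
    - intros k; pose proof (atan_step_deriv_neg y c (S k)); lra.
    - apply (@ex_series_opp R_AbsRing R_NormedModule), (proj1 (ex_series_incr_1 _)), Hex. }
  rewrite Series_opp in Htail.
  pose proof (atan_step_deriv_neg y c 0); lra.
Qed.

Lemma fsig_derive s t : 0 < t -> -1/2 < s < 3/2 ->
  is_derive (fun s => fsig s t) s (- Series (atan_step_deriv (t / 2) (1/4 - s/2)) / 2).
Proof.
  intros Ht Hs.
  apply (is_derive_ext_loc (fun s => - (PI / 4) + Series (atan_step (t / 2) (1/4 - s/2)))).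
  { apply (filter_imp (fun u => u < 3/2)); [intros u Hu; symmetry; apply fsig_atan_series; lra |].
    apply (open_lt (3/2)); lra. }
  replace (- Series (atan_step_deriv (t / 2) (1/4 - s/2)) / 2)
    with (0 + - (1/2) * Series (atan_step_deriv (t / 2) (1/4 - s/2))) by field.
  apply (is_derive_plus (fun _ => - (PI / 4)));
    [apply (@is_derive_const R_AbsRing R_NormedModule) |].
  apply (is_derive_comp (fun c => Series (atan_step (t / 2) c))).
  - apply is_derive_Series_atan_step; [lra |]. apply Rabs_def1; lra.
  - auto_derive; [exact I | field].
Qed.

Lemma fsig_derive_pos s t : 0 < t -> 0 < s < 1 ->
  0 < - Series (atan_step_deriv (t / 2) (1/4 - s/2)) / 2.
Proof.
  intros Ht Hs; pose proof (Series_atan_step_deriv_neg (t / 2) (1/4 - s/2)); lra.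
Qed.

Lemma fsig_increasing t a b : 0 < t -> 0 <= a -> a < b -> b <= 1 -> fsig a t < fsig b t.
Proof.
  intros Ht Ha Hab Hb.
  destruct (MVT_cor2 (fun s => fsig s t)
              (fun s => - Series (atan_step_deriv (t / 2) (1/4 - s/2)) / 2) a b)
    as [c [Hc Hac]]; [exact Hab | |].
  { intros c Hc; apply is_derive_Reals, fsig_derive; lra. }
  pose proof (fsig_derive_pos c t Ht ltac:(lra)); nra.
Qed.

Lemma fsig_continuous s t : 0 < t -> 0 <= s <= 1 -> continuity_pt (fun s => fsig s t) s.
Proof.
  intros Ht Hs; apply derivable_continuous_pt; eexists.
  apply is_derive_Reals, fsig_derive; lra.
Qed.

Lemma fsig_inj t a b : 0 < t -> 0 <= a <= 1 -> 0 <= b <= 1 -> fsig a t = fsig b t -> a = b.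
Proof.
  intros Ht Ha Hb Hab.
  destruct (Rtotal_order a b) as [Hlt | [Heq | Hgt]]; [| exact Heq |];
    [pose proof (fsig_increasing t a b) | pose proof (fsig_increasing t b a)]; lra.
Qed.

Lemma fsig_has_root t : 0 < t -> exists sigma, 0 < sigma < 1 /\ fsig sigma t = 0.
Proof.
  intros Ht.
  destruct (fsig_0_bounds t Ht) as [_ H0]; destruct (fsig_1_bounds t Ht) as [H1 _].
  destruct (Ranalysis5.IVT_interv (fun s => fsig s t) 0 1) as [z [Hz Hfz]];
    [intros; apply fsig_continuous; lra | lra | exact H0 | exact H1 |].
  exists z; split; [| exact Hfz].
  split; apply Rnot_le_lt; intros Hle; [replace z with 0 in Hfz | replace z with 1 in Hfz]; lra.
Qed.

Lemma fsig_range s t : 0 < t -> 0 < s < 1 -> - (PI / 2) < fsig s t < PI.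
Proof.
  intros Ht Hs.
  pose proof (fsig_0_bounds t Ht); pose proof (fsig_1_bounds t Ht).
  pose proof (fsig_increasing t 0 s Ht); pose proof (fsig_increasing t s 1 Ht); lra.
Qed.

Theorem lemma5p1 :
  (forall t : R, 0 < t ->
     (- (PI / 2) < fsig 0 t < 0) /\ (0 < fsig 1 t < PI)) /\
  (forall sigma t : R, 0 < sigma < 1 -> 0 < t ->
     ex_derive (fun s => fsig s t) sigma /\ 0 < Derive (fun s => fsig s t) sigma) /\
  (forall t : R, 0 < t ->
     (exists! sigma : R, 0 < sigma < 1 /\ fsig sigma t = 0) /\
     (forall (n : Z) (sigma : R), n <> 0%Z -> 0 < sigma < 1 ->
        fsig sigma t <> 2 * PI * IZR n)).
Proof.
  split; [intros t Ht; split; [apply fsig_0_bounds | apply fsig_1_bounds]; exact Ht |].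
  split.
  { intros s t Hs Ht; pose proof (fsig_derive s t Ht ltac:(lra)) as Hd.
    split; [eexists; exact Hd |].
    replace (Derive (fun s => fsig s t) s) with (- Series (atan_step_deriv (t / 2) (1/4 - s/2)) / 2)
      by (symmetry; now apply is_derive_unique).
    now apply fsig_derive_pos. }
  intros t Ht; split.
  - destruct (fsig_has_root t Ht) as [z [Hz Hfz]].
    exists z; split; [split; assumption |].
    intros z' [Hz' Hfz']; apply (fsig_inj t); lra.
  - intros n s Hn Hs Heq.
    pose proof (fsig_range s t Ht Hs) as Hrange; rewrite Heq in Hrange.
    pose proof PI_RGT_0.
    destruct (Z.lt_trichotomy n 0) as [Hlt | [-> | Hgt]]; [| contradiction |].
    + assert (IZR n <= -1) by (apply IZR_le; lia); nra.
    + assert (1 <= IZR n) by (apply IZR_le; lia); nra.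
Qed.
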